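(* As a symmetric set-operad, $\mathrm{RW}$ is generated by the three trees $A_\prec$, $A_\mu$, $A_\odot$.
   Context: Red and white trees: $\mathrm{RW}(n)$ is the set of finite rooted trees (children unordered) whose nodes $z$ carry possibly empty label sets $L(z)\subseteq[n]$ partitioning $[n]$, each empty node having at least two children; labelled nodes are white, an empty node is red iff all its children are white. $S_n$ acts by relabelling. Composition $T_1\circ_xT_2$ ($T_1\in\mathrm{RW}(m)$, $T_2\in\mathrm{RW}(n)$): relabel $T_1$ by $y\mapsto y+n-1$ for $y>x$ and $T_2$ by $y\mapsto y+x-1$; $z\ni x$ in $T_1$, $r$ = root of $T_2$. (W) $r$ not red: remove $x$ from $L(z)$, add $L(r)$ to $L(z)$, children of $r$ become children of $z$. (R1) $r$ red, $T_1$ the single node $\{x\}$: result $T_2$. (R2) $r$ red and ($z$ has a child or $|L(z)|\ge2$): remove $x$ from $L(z)$, attach $T_2$ as child subtree of $z$. (R3) $r$ red, $z$ non-root leaf with $L(z)=\{x\}$: delete $z$, children of $r$ become children of the parent of $z$. Colours recomputed. With these compositions and actions $\mathrm{RW}$ is a symmetric set-operad. $A_\mu$ = single node $\{1,2\}$; $A_\prec$ = root $\{1\}$ with child $\{2\}$; $A_\odot$ = empty red root with children $\{1\},\{2\}$. *)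

From mathcomp Require Import all_boot.
From Stdlib Require Import Permutation.
Set Implicit Arguments. Unset Strict Implicit. Unset Printing Implicit Defensive.

(* A tree node carries its label set L(z) (a list of labels, 1-based) and
   its list of children; children are unordered, labels form a set: both
   orders are quotiented out by [teq] below. *)
Inductive rwtree : Type := Node : seq nat -> seq rwtree -> rwtree.

Definition node_labels (T : rwtree) : seq nat := let: Node L _ := T in L.
Definition node_children (T : rwtree) : seq rwtree := let: Node _ cs := T in cs.

Fixpoint labels (T : rwtree) : seq nat :=
  let: Node L cs := T in L ++ flatten (map labels cs).

Fixpoint wf_empty (T : rwtree) : bool :=
  let: Node L cs := T in ((L != [::]) || (1 < size cs)) && all wf_empty cs.

Definition is_rw (n : nat) (T : rwtree) : bool :=
  perm_eq (labels T) (iota 1 n) && wf_empty T.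

Inductive teq : rwtree -> rwtree -> Prop :=
| teq_node : forall L L' cs cs' ds,
    perm_eq L L' -> Permutation cs ds -> List.Forall2 teq ds cs' ->
    teq (Node L cs) (Node L' cs').

Fixpoint relabel (f : nat -> nat) (T : rwtree) : rwtree :=
  let: Node L cs := T in Node (map f L) (map (relabel f) cs).

(* white = labelled; red = empty with all children white *)
Definition is_red (T : rwtree) : bool :=
  let: Node L cs := T in (L == [::]) && all (fun c => node_labels c != [::]) cs.

(* rule (W): at the node z containing x *)
Fixpoint insertW (x : nat) (Lr : seq nat) (cr : seq rwtree) (T : rwtree) : rwtree :=
  let: Node L cs := T in
  if x \in L then Node (rem x L ++ Lr) (cs ++ cr)
  else Node L (map (insertW x Lr cr) cs).

(* rules (R2)/(R3), T1 not the single node {x} *)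
Fixpoint insertR (x : nat) (T2 : rwtree) (T : rwtree) : rwtree :=
  let: Node L cs := T in
  if x \in L then Node (rem x L) (cs ++ [:: T2])                 (* (R2) *)
  else Node L (flatten (map (fun c =>
         match c with
         | Node [:: y] [::] => if y == x then node_children T2     (* (R3) *)
                               else [:: insertR x T2 c]
         | _ => [:: insertR x T2 c]
         end) cs)).

(* T1 \circ_x T2, with T2 of arity n *)
Definition comp (n x : nat) (T1 T2 : rwtree) : rwtree :=
  let T1' := relabel (fun y => if x < y then y + n - 1 else y) T1 in
  let T2' := relabel (fun y => y + x - 1) T2 in
  if ~~ is_red T2' then insertW x (node_labels T2') (node_children T2') T1'
  else match T1' with
       | Node [:: y] [::] => if y == x then T2' else insertR x T2' T1'  (* (R1) *)
       | _ => insertR x T2' T1'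
       end.

(* action of a permutation of [n], given as the sequence s of images of 1..n *)
Definition act (s : seq nat) (T : rwtree) : rwtree :=
  relabel (fun y => nth 0 s y.-1) T.

Definition A_mu : rwtree := Node [:: 1; 2] [::].
Definition A_prec : rwtree := Node [:: 1] [:: Node [:: 2] [::]].
Definition A_odot : rwtree := Node [::] [:: Node [:: 1] [::]; Node [:: 2] [::]].
Definition unit_tree : rwtree := Node [:: 1] [::].

(* the symmetric suboperad generated by A_prec, A_mu, A_odot
   (on representatives; the statement compares up to [teq]) *)
Inductive Gen : nat -> rwtree -> Prop :=
| gen_unit : Gen 1 unit_tree
| gen_mu : Gen 2 A_mu
| gen_prec : Gen 2 A_prec
| gen_odot : Gen 2 A_odot
| gen_comp : forall m n x T1 T2, Gen m T1 -> Gen n T2 -> 1 <= x <= m ->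
    Gen (m + n - 1) (comp n x T1 T2)
| gen_act : forall n s T, Gen n T -> perm_eq s (iota 1 n) -> Gen n (act s T).

(* The proof is by strong induction on the size of the
   tree T = Node L cs (labels distinct, empty nodes with >= 2 children).
   Choose a label h not occurring in T; then T is the graft at h of two
   strictly smaller trees, T0 \circ_h T1, unless it is a leaf or A_odot:
   - a child c that is neither a leaf nor red is grafted by rule (W) onto a
     new leaf {h} standing in its place;
   - a red child c is grafted by rule (R2) onto the root, extended by h;
   - if all children are leaves, either two root labels split off as
     {a, h} \circ_h {b, ...} (rule (W)), or a leaf child {b} of a root
     {a, ...} splits off as T0 \circ_a A_prec (rule (W)), or an empty root
     with >= 3 leaf children is A_odot \circ_h (red rest) (rule (R3)). *)
From mathcomp Require Import all_boot zify.
From Stdlib Require Import Permutation.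
Set Implicit Arguments. Unset Strict Implicit. Unset Printing Implicit Defensive.

Notation leaf y := (Node [:: y] [::]).
Notation child_labels cs := (flatten (map labels cs)).

Lemma rwtree_ind_in (P : rwtree -> Prop) :
  (forall L cs, (forall c, List.In c cs -> P c) -> P (Node L cs)) -> forall T, P T.
Proof.
move=> H; fix IH 1 => -[L cs]; apply: H.
exact: (fix children cs : forall c, List.In c cs -> P c :=
  match cs with
  | [::] => fun c (Hc : List.In c [::]) => match Hc with end
  | d :: ds => fun c Hc => match Hc with
      | or_introl E => eq_ind d P (IH d) c E
      | or_intror Hc' => children ds c Hc' end end).
Qed.

Lemma teq_ind_in (P : rwtree -> rwtree -> Prop) :
  (forall L L' cs cs' ds, perm_eq L L' -> Permutation cs ds ->
     List.Forall2 (fun a b => teq a b /\ P a b) ds cs' ->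
     P (Node L cs) (Node L' cs')) ->
  forall a b, teq a b -> P a b.
Proof.
move=> H; fix IH 3 => a b [L L' cs cs' ds Hp Hperm HF]; apply: (H _ _ _ _ ds) => //.
elim: HF {Hperm} => [|x y l l' Hxy _ IHF]; constructor => //; split=> //; exact: IH.
Qed.

Section ListFacts.
Variables A B C : Type.

Lemma Forall2_refl_in (R : A -> A -> Prop) s :
  (forall a, List.In a s -> R a a) -> List.Forall2 R s s.
Proof. elim: s => //= a s IH H; constructor; auto. Qed.

Lemma Forall2_flip (R : A -> B -> Prop) s t :
  List.Forall2 R s t -> List.Forall2 (fun b a => R a b) t s.
Proof. by elim=> *; constructor. Qed.

Lemma Forall2_trans (R : A -> B -> Prop) (R' : B -> C -> Prop) (R'' : A -> C -> Prop) s t u :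
  (forall a b c, R a b -> R' b c -> R'' a c) ->
  List.Forall2 R s t -> List.Forall2 R' t u -> List.Forall2 R'' s u.
Proof.
move=> H F1; elim: F1 u => [|a b s' t' Hab _ IH] u F2; inversion F2; subst; constructor; eauto.
Qed.

Lemma Forall2_map (F : A -> C) (G : B -> C) (R : C -> C -> Prop) s t :
  List.Forall2 (fun a b => R (F a) (G b)) s t -> List.Forall2 R (map F s) (map G t).
Proof. by elim=> *; constructor. Qed.

Lemma Permutation_flatten (F : A -> seq B) s t :
  Permutation s t -> Permutation (flatten (map F s)) (flatten (map F t)).
Proof.
elim=> //= [x l l' _ H|x y l|l l' l'' _ H1 _ H2].
- exact: Permutation_app_head.
- by rewrite !catA; apply: Permutation_app_tail; apply: Permutation_app_comm.
- exact: Permutation_trans H1 H2.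
Qed.

Lemma all_Permutation (p : pred A) s t : Permutation s t -> all p s = all p t.
Proof. by elim=> //= [x l l' _ ->|x y l|l l' l'' _ -> _ ->] //; rewrite andbCA. Qed.

Lemma sumn_Permutation (F : A -> nat) s t : Permutation s t -> sumn (map F s) = sumn (map F t).
Proof. by elim=> //= [x l l' _ ->|x y l|l l' l'' _ -> _ ->] //; lia. Qed.

Lemma size_Permutation (s t : seq A) : Permutation s t -> size s = size t.
Proof. by elim=> //= [x l l' _ ->|l l' l'' _ -> _ ->]. Qed.

Lemma has_Permutation (p : pred A) s :
  has p s -> exists c rest, Permutation s (c :: rest) /\ p c.
Proof.
elim: s => //= c s IH; case Pc: (p c) => /=; first by exists c, s.
move/IH => [d [rest [H1 H2]]]; exists d, (c :: rest); split => //.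
exact: Permutation_trans (perm_skip c H1) (perm_swap _ _ _).
Qed.
End ListFacts.

Lemma perm_flatten_Permutation (g : rwtree -> seq nat) cs ds :
  Permutation cs ds -> perm_eq (flatten (map g cs)) (flatten (map g ds)).
Proof.
elim=> //= [x l l' _ H|x y l|l l' l'' _ H1 _ H2].
- by rewrite perm_cat2l.
- by rewrite perm_catCA.
- exact: seq.perm_trans H1 H2.
Qed.

Lemma perm_flatten_Forall2 (g : rwtree -> seq nat) cs ds :
  List.Forall2 (fun a b => perm_eq (g a) (g b)) cs ds ->
  perm_eq (flatten (map g cs)) (flatten (map g ds)).
Proof. by elim=> //= a b s t H _ IH; apply: perm_cat. Qed.

Definition lteq (cs cs' : seq rwtree) :=
  exists ds, Permutation cs ds /\ List.Forall2 teq ds cs'.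

Lemma teq_nodeE L L' cs cs' :
  teq (Node L cs) (Node L' cs') <-> perm_eq L L' /\ lteq cs cs'.
Proof.
split; first by move=> H; inversion H; subst; split=> //; eexists; split; eauto.
by case=> Hp [ds [H1 H2]]; econstructor; eauto.
Qed.

Lemma teq_refl T : teq T T.
Proof.
elim/rwtree_ind_in: T => L cs IH.
by econstructor; [exact: perm_refl | exact: Permutation_refl | exact: Forall2_refl_in].
Qed.

Lemma teq_trans a b c : teq a b -> teq b c -> teq a c.
Proof.
move=> Hab; elim/teq_ind_in: a b / Hab c => L L' cs cs' ds Hp Hperm HF [L'' cs''].
move=> /teq_nodeE [Hp' [es [Hperm' HF']]].
have [ds' [Hds Hds']] := Permutation_Forall2 Hperm' (Forall2_flip HF).
apply/teq_nodeE; split; first exact: seq.perm_trans Hp Hp'.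
exists ds'; split; first exact: Permutation_trans Hperm Hds.
by apply: Forall2_trans (Forall2_flip Hds') HF' => x y z [_ H] /H.
Qed.

Lemma lteq_refl cs : lteq cs cs.
Proof. by exists cs; split; [exact: Permutation_refl | apply: Forall2_refl_in => *; exact: teq_refl]. Qed.

Lemma lteq_Permutation cs ds : Permutation cs ds -> lteq cs ds.
Proof. by move=> H; exists ds; split => //; apply: Forall2_refl_in => *; exact: teq_refl. Qed.

Lemma lteq_app a b c d : lteq a b -> lteq c d -> lteq (a ++ c) (b ++ d).
Proof.
move=> [x [H1 H2]] [y [H3 H4]]; exists (x ++ y).
by split; [exact: Permutation_app | exact: List.Forall2_app].
Qed.

Lemma lteq_cons x y a b : teq x y -> lteq a b -> lteq (x :: a) (y :: b).
Proof. by move=> H [ds [H1 H2]]; exists (x :: ds); split; constructor. Qed.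

Lemma lteq_trans_Permutation cs ds es : Permutation cs ds -> lteq ds es -> lteq cs es.
Proof. by move=> H [fs [H1 H2]]; exists fs; split=> //; apply: Permutation_trans H H1. Qed.

Lemma lteq_flatten (F G : rwtree -> seq rwtree) ds cs :
  List.Forall2 (fun a b => lteq (F a) (G b)) ds cs ->
  lteq (flatten (map F ds)) (flatten (map G cs)).
Proof. by elim=> /= [|a b s t H _ IH]; [exact: lteq_refl | apply: lteq_app]. Qed.

Lemma teq_labels a b : teq a b -> perm_eq (labels a) (labels b).
Proof.
elim/teq_ind_in=> L L' cs cs' ds Hp Hperm HF /=; apply: perm_cat => //.
apply: seq.perm_trans (perm_flatten_Permutation labels Hperm) _.
by apply: perm_flatten_Forall2; apply: List.Forall2_impl HF => ? ? [].
Qed.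

Lemma perm_eq_nil (L L' : seq nat) : perm_eq L L' -> (L == [::]) = (L' == [::]).
Proof. by move/perm_size; case: L; case: L'. Qed.

Lemma teq_is_red a b : teq a b -> is_red a = is_red b.
Proof.
case=> L L' cs cs' ds Hp Hperm HF /=; rewrite (perm_eq_nil Hp) (all_Permutation _ Hperm).
congr andb; elim: HF => //= -[l1 c1] [l2 c2] s t /teq_nodeE [H _] _ ->.
by rewrite (perm_eq_nil H).
Qed.

Definition leaf_label (c : rwtree) : option nat :=
  if c is Node [:: y] [::] then Some y else None.

Lemma leaf_labelP c y : leaf_label c = Some y -> c = leaf y.
Proof. by case: c => [[|y' [|]] [|]] //= [->]. Qed.

Lemma perm_eq1 (y : nat) L : perm_eq L [:: y] -> L = [:: y].
Proof.
move=> H; have := perm_size H; case: L H => [|z [|//]] //= H _.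
by move: (perm_mem H y); rewrite !inE eqxx => /eqP ->.
Qed.

Lemma teq_leaf y a b : teq a b -> (a = leaf y <-> b = leaf y).
Proof.
case=> L L' cs cs' ds Hp Hperm HF; split=> -[EL Ecs]; subst.
- rewrite perm_sym in Hp; rewrite (perm_eq1 Hp) (Permutation_nil Hperm) in HF *.
  by inversion HF.
- rewrite (perm_eq1 Hp); inversion HF; subst.
  by rewrite (Permutation_nil (Permutation_sym Hperm)).
Qed.

Lemma leaf_label_teq a b : teq a b -> leaf_label a = leaf_label b.
Proof.
move=> H; case Ea: (leaf_label a) => [y|].
  by move/leaf_labelP: Ea => /(teq_leaf y H) ->.
case Eb: (leaf_label b) => [y|] //.
by move/leaf_labelP: Eb => /(teq_leaf y H) Ea'; rewrite Ea' in Ea.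
Qed.

(* Grafting [B] at the label [x] of [A], by rules (W), (R1), (R2), (R3):
   this is [comp] on trees whose labels have already been shifted apart. *)
Definition graft (x : nat) (A B : rwtree) : rwtree :=
  if ~~ is_red B then insertW x (node_labels B) (node_children B) A
  else if leaf_label A == Some x then B else insertR x B A.

Definition shift_after (n x y : nat) : nat := if x < y then y + n - 1 else y.
Definition shift_into (x y : nat) : nat := y + x - 1.

Lemma comp_graft n x T1 T2 :
  comp n x T1 T2 = graft x (relabel (shift_after n x) T1) (relabel (shift_into x) T2).
Proof.
rewrite /comp /graft; case: ifP => // _.
by case: (relabel _ T1) => [[|y [|z l]] [|d ds]] //=; rewrite (inj_eq Some_inj).
Qed.

Lemma node_eta T : Node (node_labels T) (node_children T) = T.
Proof. by case: T. Qed.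

Lemma graft_red x A B :
  is_red B -> graft x A B = if leaf_label A == Some x then B else insertR x B A.
Proof. by rewrite /graft => ->. Qed.

Lemma graft_white x A B :
  ~~ is_red B -> graft x A B = insertW x (node_labels B) (node_children B) A.
Proof. by rewrite /graft => ->. Qed.

Definition insertR_child (x : nat) (B c : rwtree) : seq rwtree :=
  if leaf_label c == Some x then node_children B else [:: insertR x B c].

Lemma insertR_node x B L cs : insertR x B (Node L cs) =
  if x \in L then Node (rem x L) (cs ++ [:: B])
  else Node L (flatten (map (insertR_child x B) cs)).
Proof.
rewrite /=; case: ifP => // _; congr (Node _ (flatten _)); apply: eq_map.
by rewrite /insertR_child => -[[|y [|z l]] [|d ds]] //=; rewrite (inj_eq Some_inj).
Qed.

Lemma perm_rem (x : nat) L L' : perm_eq L L' -> perm_eq (rem x L) (rem x L').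
Proof.
move=> H; case Hx: (x \in L); last by rewrite !rem_id -?(perm_mem H) ?Hx.
have Hx' : x \in L' by rewrite -(perm_mem H).
rewrite -(perm_cons x); apply: seq.perm_trans (seq.perm_trans H (perm_to_rem Hx')).
by rewrite perm_sym perm_to_rem.
Qed.

Lemma insertW_teq x Lr Lr' cr cr' A A' : perm_eq Lr Lr' -> lteq cr cr' -> teq A A' ->
  teq (insertW x Lr cr A) (insertW x Lr' cr' A').
Proof.
move=> HL Hc; elim/teq_ind_in=> L L' cs cs' ds Hp Hperm HF /=.
have HF' : List.Forall2 teq ds cs' by apply: List.Forall2_impl HF => ? ? [].
rewrite -(perm_mem Hp); case: ifP => Hx; apply/teq_nodeE; split => //.
- by apply: perm_cat => //; exact: perm_rem.
- by apply: lteq_app => //; exists ds.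
- exists (map (insertW x Lr cr) ds); split; first exact: Permutation_map.
  by apply: Forall2_map; apply: List.Forall2_impl HF => ? ? [].
Qed.

Lemma insertR_teq x B B' A A' : teq B B' -> teq A A' ->
  teq (insertR x B A) (insertR x B' A').
Proof.
move=> HB; elim/teq_ind_in=> L L' cs cs' ds Hp Hperm HF.
have HF' : List.Forall2 teq ds cs' by apply: List.Forall2_impl HF => ? ? [].
rewrite !insertR_node -(perm_mem Hp); case: ifP => Hx; apply/teq_nodeE; split => //.
- exact: perm_rem.
- by apply: lteq_app; [exists ds | apply: lteq_cons => //; exact: lteq_refl].
- apply: (lteq_trans_Permutation (Permutation_flatten _ Hperm)); apply: lteq_flatten.
  apply: List.Forall2_impl HF => a b [Hab IH]; rewrite /insertR_child (leaf_label_teq Hab).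
  case: ifP => _; last by apply: lteq_cons => //; exact: lteq_refl.
  by case: B B' HB {IH} => ? ? [? ?] /teq_nodeE [].
Qed.

Lemma graft_teq x A A' B B' : teq A A' -> teq B B' -> teq (graft x A B) (graft x A' B').
Proof.
move=> HA HB; case R: (is_red B).
  rewrite !graft_red -?(teq_is_red HB) // (leaf_label_teq HA).
  by case: ifP => // _; exact: insertR_teq.
rewrite !graft_white -?(teq_is_red HB) ?R //.
by case: B B' HB {R} => ? ? [? ?] /teq_nodeE [H1 H2]; apply: insertW_teq.
Qed.

Lemma relabel_comp f g T : relabel f (relabel g T) = relabel (f \o g) T.
Proof.
elim/rwtree_ind_in: T => L cs IH /=; rewrite -map_comp; congr Node.
by rewrite -map_comp; exact: List.map_ext_in.
Qed.

Lemma labels_relabel f T : labels (relabel f T) = map f (labels T).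
Proof.
elim/rwtree_ind_in: T => L cs IH /=; rewrite map_cat map_flatten -!map_comp.
by congr (_ ++ flatten _); exact: List.map_ext_in.
Qed.

Lemma In_labels c cs : List.In c cs -> {subset labels c <= child_labels cs}.
Proof. elim: cs => //= d cs IH [<-|H] y Hy; rewrite mem_cat ?Hy // IH ?orbT //. Qed.

Lemma eq_in_relabel f g T : {in labels T, f =1 g} -> relabel f T = relabel g T.
Proof.
elim/rwtree_ind_in: T => L cs IH /= H; congr Node.
  by apply/eq_in_map => y Hy; apply: H; rewrite mem_cat Hy.
apply: List.map_ext_in => c Hc; apply: IH => // y Hy.
by apply: H; rewrite mem_cat (In_labels Hc Hy) orbT.
Qed.

Lemma is_red_relabel f T : is_red (relabel f T) = is_red T.
Proof.
case: T => L cs /=; congr andb; first by case: L.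
by elim: cs => //= -[L' cs'] cs ->; case: L'.
Qed.

Lemma leaf_label_relabel (h : nat -> nat) c : leaf_label (relabel h c) = omap h (leaf_label c).
Proof. by case: c => [[|y [|z l]] [|d cs]]. Qed.

Lemma mem_map_in (f : nat -> nat) x s :
  {in x :: s &, injective f} -> (f x \in map f s) = (x \in s).
Proof.
move=> H; apply/mapP/idP => [[y Hy E]|Hx]; last by exists x.
by rewrite (H x y) // inE ?eqxx ?Hy ?orbT.
Qed.

Lemma map_rem_in (f : nat -> nat) x s :
  {in x :: s &, injective f} -> rem (f x) (map f s) = map f (rem x s).
Proof.
elim: s => //= y s IH H; case: (eqVneq y x) => [->|N]; first by rewrite eqxx.
have /negbTE -> : f y != f x.
  by apply: contra N => /eqP E; apply/eqP; apply: H; rewrite ?inE ?eqxx ?orbT.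
rewrite IH //; apply: sub_in2 H => z; rewrite !inE.
by case/orP=> ->; rewrite ?orbT.
Qed.

Lemma inj_in_sub (f : nat -> nat) x s t : {subset t <= s} ->
  {in x :: s &, injective f} -> {in x :: t &, injective f}.
Proof.
by move=> S; apply: sub_in2 => z; rewrite !inE => /orP [->|/S ->]; rewrite ?orbT.
Qed.

Section GraftRelabel.
Variables (σ f g : nat -> nat) (x0 : nat).

Definition relabel_compatible (A : rwtree) :=
  [/\ uniq (labels A), {in x0 :: labels A &, injective σ},
      {in x0 :: labels A &, injective f}
    & {in labels A, forall y, y != x0 -> g (σ y) = f y}].

Lemma relabel_compatible_child L cs c :
  relabel_compatible (Node L cs) -> List.In c cs -> relabel_compatible c.
Proof.
case=> /= U I1 I2 E Hc; have S : {subset labels c <= L ++ child_labels cs}.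
  by move=> y Hy; rewrite mem_cat (In_labels Hc Hy) orbT.
split; [|exact: inj_in_sub I1|exact: inj_in_sub I2|by move=> y /S; apply: E].
have {U} : uniq (child_labels cs) by move: U; rewrite cat_uniq => /and3P [].
elim: cs Hc {S E I1 I2} => //= d cs IH Hc; rewrite cat_uniq => /and3P [Ud _ Ucs].
by case: Hc => [<- // | /IH]; apply.
Qed.

(* Subtrees below the node carrying [x0] avoid [x0]: [g \o σ = f] there. *)
Lemma relabel_below L cs c : relabel_compatible (Node L cs) -> x0 \in L -> List.In c cs ->
  relabel g (relabel σ c) = relabel f c.
Proof.
case=> U _ _ E Hx Hc; rewrite relabel_comp; apply: eq_in_relabel => y Hy /=.
apply: E; first by rewrite /= mem_cat (In_labels Hc Hy) orbT.
apply: contraTneq Hx => Ey; subst y; move: U; rewrite cat_uniq => /and3P [_ D _].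
by apply: contra D => Hx; apply/hasP; exists x0 => //; exact: In_labels Hy.
Qed.

Lemma relabel_root L cs : relabel_compatible (Node L cs) -> {in L, forall y, y != x0} ->
  map g (map σ L) = map f L.
Proof.
case=> _ _ _ E H; rewrite -map_comp; apply/eq_in_map => y Hy /=.
by apply: E; [rewrite /= mem_cat Hy | exact: H].
Qed.

Lemma relabel_root_rem L cs : relabel_compatible (Node L cs) -> x0 \in L ->
  map g (rem (σ x0) (map σ L)) = rem (f x0) (map f L).
Proof.
move=> [U I1 I2 E] Hx.
have S : {subset L <= labels (Node L cs)} by move=> y Hy; rewrite /= mem_cat Hy.
rewrite (map_rem_in (inj_in_sub S I1)) (map_rem_in (inj_in_sub S I2)) -map_comp.
apply/eq_in_map => y Hy /=; apply: E; first by rewrite /= mem_cat (mem_rem Hy).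
have UL : uniq L by move: U; rewrite /= cat_uniq => /andP [].
by apply: contraTneq Hy => ->; rewrite mem_rem_uniqF.
Qed.

Lemma leaf_label_relabel_eq (h : nat -> nat) c : {in x0 :: labels c &, injective h} ->
  (leaf_label (relabel h c) == Some (h x0)) = (leaf_label c == Some x0).
Proof.
move=> I; rewrite leaf_label_relabel; case E: (leaf_label c) => [y|] //=.
rewrite !(inj_eq Some_inj); apply/eqP/eqP => [E'|->] //.
by apply: I => //; rewrite (leaf_labelP E) !inE eqxx ?orbT.
Qed.

Lemma insertW_relabel Lr cr A : relabel_compatible A ->
  relabel g (insertW (σ x0) Lr cr (relabel σ A)) =
  insertW (f x0) (map g Lr) (map (relabel g) cr) (relabel f A).
Proof.
elim/rwtree_ind_in: A => L cs IH Hc /=; have [_ I1 I2 _] := Hc.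
have S : {subset L <= labels (Node L cs)} by move=> y Hy; rewrite /= mem_cat Hy.
rewrite (mem_map_in (inj_in_sub S I1)) (mem_map_in (inj_in_sub S I2)); case: ifP => Hx /=.
  rewrite map_cat (relabel_root_rem Hc Hx) map_cat -map_comp; congr (Node _ (_ ++ _)).
  by apply: List.map_ext_in => c Hin; exact: relabel_below Hc Hx Hin.
rewrite (relabel_root Hc); last by move=> y Hy; apply: contraTneq Hy => ->; rewrite Hx.
congr Node; rewrite -!map_comp; apply: List.map_ext_in => c Hin /=.
exact: IH c Hin (relabel_compatible_child Hc Hin).
Qed.

Lemma insertR_relabel B A : relabel_compatible A ->
  relabel g (insertR (σ x0) B (relabel σ A)) = insertR (f x0) (relabel g B) (relabel f A).
Proof.
elim/rwtree_ind_in: A => L cs IH Hc; have [_ I1 I2 _] := Hc.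
rewrite /relabel -/relabel !insertR_node.
have S : {subset L <= labels (Node L cs)} by move=> y Hy; rewrite /= mem_cat Hy.
rewrite (mem_map_in (inj_in_sub S I1)) (mem_map_in (inj_in_sub S I2)); case: ifP => Hx /=.
  rewrite (relabel_root_rem Hc Hx) map_cat -map_comp; congr (Node _ (_ ++ _)).
  by apply: List.map_ext_in => c Hin; exact: relabel_below Hc Hx Hin.
rewrite (relabel_root Hc); last by move=> y Hy; apply: contraTneq Hy => ->; rewrite Hx.
congr Node; rewrite map_flatten -!map_comp; congr flatten; apply: List.map_ext_in => c Hin /=.
have Hc' := relabel_compatible_child Hc Hin; have [_ J1 J2 _] := Hc'.
rewrite /insertR_child (leaf_label_relabel_eq J1) (leaf_label_relabel_eq J2).
by case: ifP => _ /=; [case: (B) | rewrite (IH c Hin Hc')].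
Qed.

Lemma graft_relabel B A : relabel_compatible A ->
  relabel g (graft (σ x0) (relabel σ A) B) = graft (f x0) (relabel f A) (relabel g B).
Proof.
move=> Hc; have [_ I1 I2 _] := Hc; case R: (is_red B).
  rewrite !graft_red ?is_red_relabel // (leaf_label_relabel_eq I1) (leaf_label_relabel_eq I2).
  by case: ifP => // _; exact: insertR_relabel.
by rewrite !graft_white ?is_red_relabel ?R // insertW_relabel //; case: (B).
Qed.
End GraftRelabel.

Lemma rem_cat (x : nat) s t : rem x (s ++ t) = if x \in s then rem x s ++ t else s ++ rem x t.
Proof.
elim: s => //= y s IH; rewrite inE; case: (eqVneq y x) => [->|N] /=; first by rewrite ?eqxx.
by rewrite IH; case: ifP.
Qed.

Lemma notin_child (x : nat) L cs c :
  x \notin labels (Node L cs) -> List.In c cs -> x \notin labels c.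
Proof. by move=> H Hc; apply: contra H => /(In_labels Hc) Hx; rewrite /= mem_cat Hx orbT. Qed.

Lemma insertW_id x Lr cr A : x \notin labels A -> insertW x Lr cr A = A.
Proof.
elim/rwtree_ind_in: A => L cs IH H /=.
rewrite ifF; last by apply/negbTE; apply: contra H; rewrite /= mem_cat => ->.
congr Node; rewrite -[RHS]map_id; apply: List.map_ext_in => c Hc.
exact: IH c Hc (notin_child H Hc).
Qed.

Lemma insertR_child_id x B c : x \notin labels c -> insertR_child x B c = [:: insertR x B c].
Proof.
rewrite /insertR_child; case: ifP => // /eqP /leaf_labelP ->.
by rewrite /= mem_seq1 eqxx.
Qed.

Lemma insertR_id x B A : x \notin labels A -> insertR x B A = A.
Proof.
elim/rwtree_ind_in: A => L cs IH H; rewrite insertR_node.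
rewrite ifF; last by apply/negbTE; apply: contra H; rewrite /= mem_cat => ->.
congr Node; rewrite -[RHS]flatten_seq1; congr flatten; apply: List.map_ext_in => c Hc.
by have Hx := notin_child H Hc; rewrite insertR_child_id // IH.
Qed.

Lemma labels_replace_child (F : rwtree -> seq rwtree) x extra cs :
  uniq (child_labels cs) -> x \in child_labels cs ->
  (forall c, List.In c cs -> x \notin labels c -> F c = [:: c]) ->
  (forall c, List.In c cs -> uniq (labels c) -> x \in labels c ->
     perm_eq (child_labels (F c)) (rem x (labels c) ++ extra)) ->
  perm_eq (child_labels (flatten (map F cs))) (rem x (child_labels cs) ++ extra).
Proof.
elim: cs => //= c cs IH; rewrite cat_uniq => /and3P [Uc D Ucs] Hx Fout Fin.
rewrite map_cat flatten_cat rem_cat.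
case: ifP => Hxc.
  have Hn : x \notin child_labels cs by apply: contra D => Hy; apply/hasP; exists x.
  have -> : flatten (map F cs) = cs.
    rewrite -[RHS]flatten_seq1; congr flatten; apply: List.map_ext_in => d Hd.
    by apply: Fout; [right | apply: contra Hn; apply: In_labels].
  apply: seq.perm_trans (perm_cat (Fin c (or_introl erefl) Uc Hxc) (perm_refl _)) _.
  by rewrite -!catA perm_cat2l perm_catC.
rewrite Fout ?Hxc //=; last by left.
rewrite cats0 -catA perm_cat2l; apply: IH => //; first by move: Hx; rewrite mem_cat Hxc.
- by move=> d Hd; apply: Fout; right.
- by move=> d Hd; apply: Fin; right.
Qed.

Lemma insertW_labels x Lr cr A : uniq (labels A) -> x \in labels A ->
  perm_eq (labels (insertW x Lr cr A)) (rem x (labels A) ++ (Lr ++ child_labels cr)).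
Proof.
elim/rwtree_ind_in: A => L cs IH /= U Hx; rewrite rem_cat; case: ifP => HL /=.
  by rewrite map_cat flatten_cat -!catA perm_cat2l perm_catCA perm_cat2l.
rewrite -catA perm_cat2l; move: U; rewrite cat_uniq => /and3P [_ _ U].
rewrite -[map (insertW _ _ _) cs]flatten_seq1 -map_comp.
apply: labels_replace_child => //; first by move: Hx; rewrite mem_cat HL.
- by move=> c _ Hc /=; rewrite insertW_id.
- by move=> c Hc Uc Hxc /=; rewrite cats0; apply: IH.
Qed.

Lemma insertR_labels x B A : uniq (labels A) -> x \in labels A -> node_labels B = [::] ->
  leaf_label A != Some x -> perm_eq (labels (insertR x B A)) (rem x (labels A) ++ labels B).
Proof.
elim/rwtree_ind_in: A => L cs IH U Hx HB HA; rewrite insertR_node /= rem_cat.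
case: ifP => HL /=; first by rewrite map_cat flatten_cat /= cats0 catA.
rewrite -catA perm_cat2l; move: U; rewrite cat_uniq => /and3P [_ _ U].
apply: labels_replace_child => //; first by move: Hx; rewrite mem_cat HL.
- by move=> c _ Hc; rewrite insertR_child_id ?insertR_id.
move=> c Hc Uc Hxc; rewrite /insertR_child; case: ifP => Hl /=.
  move/eqP/leaf_labelP: Hl => ->; rewrite /= eqxx.
  by case: (B) HB => L' cs' /= ->.
by rewrite cats0; apply: IH => //; rewrite Hl.
Qed.

Lemma labels_graft x A B : uniq (labels A) -> x \in labels A ->
  perm_eq (labels (graft x A B)) (rem x (labels A) ++ labels B).
Proof.
move=> U Hx; case R: (is_red B).
  have HB : node_labels B = [::] by case: B R => [[|? ?] ?].
  rewrite graft_red //; case: ifP => Hl; last exact: insertR_labels (negbT Hl).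
  by move/eqP/leaf_labelP: Hl => ->; rewrite /= eqxx.
by rewrite graft_white ?R //; apply: seq.perm_trans (insertW_labels _ _ U Hx) _; case: (B).
Qed.

Lemma shift_after_inj n x : 0 < n -> injective (shift_after n x).
Proof. by move=> Hn a b; rewrite /shift_after; case: (ltnP x a); case: (ltnP x b); lia. Qed.

Lemma mem_iota1 y m : (y \in iota 1 m) = (1 <= y <= m).
Proof. by rewrite mem_iota; lia. Qed.

Lemma shifted_labels m n x : 0 < n -> 1 <= x <= m ->
  perm_eq (rem x (map (shift_after n x) (iota 1 m)) ++ map (shift_into x) (iota 1 n))
          (iota 1 (m + n - 1)).
Proof.
move=> Hn Hx.
have Eouter : map (shift_after n x) (iota 1 m) =
              iota 1 (x - 1) ++ x :: iota (x + n) (m - x).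
  have -> : iota 1 m = iota 1 (x - 1) ++ x :: iota (x + 1) (m - x).
    rewrite (_ : m = (x - 1) + (1 + (m - x))) ?iotaD /=; last by lia.
    by congr (_ ++ _ :: iota _ _); lia.
  rewrite map_cat /= /shift_after ltnn; congr (_ ++ _ :: _).
    by rewrite -[RHS]map_id; apply/eq_in_map => y; rewrite mem_iota => Hy; rewrite ifF //; lia.
  rewrite (_ : x + n = (n - 1) + (x + 1)); last by lia.
  by rewrite [in RHS]iotaDl; apply/eq_in_map => y; rewrite mem_iota => Hy; rewrite ifT; lia.
have Einner : map (shift_into x) (iota 1 n) = iota x n.
  rewrite [in RHS](_ : x = (x - 1) + 1); last by lia.
  by rewrite iotaDl; apply/eq_in_map => y; rewrite mem_iota /shift_into; lia.
have Eall : iota 1 (m + n - 1) = iota 1 (x - 1) ++ iota x n ++ iota (x + n) (m - x).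
  rewrite (_ : m + n - 1 = (x - 1) + (n + (m - x))); last by lia.
  by rewrite !iotaD; congr (_ ++ iota _ _ ++ iota _ _); lia.
rewrite Eouter Einner Eall rem_cat ifF; last by rewrite mem_iota; lia.
by rewrite /= eqxx -!catA perm_cat2l perm_catC.
Qed.

Lemma comp_labels m n x U0 U1 :
  perm_eq (labels U0) (iota 1 m) -> perm_eq (labels U1) (iota 1 n) ->
  0 < n -> 1 <= x <= m -> perm_eq (labels (comp n x U0 U1)) (iota 1 (m + n - 1)).
Proof.
move=> P0 P1 Hn Hx; rewrite comp_graft.
have U : uniq (labels (relabel (shift_after n x) U0)).
  by rewrite labels_relabel (map_inj_uniq (@shift_after_inj n x Hn)) (perm_uniq P0) iota_uniq.
have Mx : x \in labels (relabel (shift_after n x) U0).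
  rewrite labels_relabel; apply/mapP; exists x; last by rewrite /shift_after ltnn.
  by rewrite (perm_mem P0) mem_iota1.
apply: seq.perm_trans (labels_graft _ U Mx) _; rewrite !labels_relabel.
apply: seq.perm_trans (shifted_labels Hn Hx).
by apply: perm_cat; [apply: perm_rem; apply: perm_map | apply: perm_map].
Qed.

Lemma comp_relabel m n x U0 U1 f0 f1 :
  perm_eq (labels U0) (iota 1 m) -> perm_eq (labels U1) (iota 1 n) -> 0 < n ->
  {in labels U0 &, injective f0} -> x \in labels U0 ->
  exists g, relabel g (comp n x U0 U1) = graft (f0 x) (relabel f0 U0) (relabel f1 U1).
Proof.
move=> P0 P1 Hn I0 Mx; have Hx : 1 <= x <= m by rewrite -mem_iota1 -(perm_mem P0).
pose g w := if x <= w < x + n then f1 (w - x + 1)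
            else if w < x then f0 w else f0 (w - n + 1).
have Ex : shift_after n x x = x by rewrite /shift_after ltnn.
exists g; rewrite comp_graft -{1}Ex.
rewrite (@graft_relabel (shift_after n x) f0 g x) ?relabel_comp.
  congr graft; apply: eq_in_relabel => z Mz /=.
  have : 1 <= z <= n by rewrite -mem_iota1 -(perm_mem P1).
  by rewrite /g /shift_into => Hz; rewrite ifT; [congr f1|]; lia.
split.
- by rewrite (perm_uniq P0) iota_uniq.
- by move=> a b _ _; apply: shift_after_inj.
- by apply: sub_in2 I0 => z; rewrite inE => /orP [/eqP ->|].
- move=> y My Ny; have : 1 <= y <= m by rewrite -mem_iota1 -(perm_mem P0).
  rewrite /g /shift_after => Hy; case: (ltnP x y) => Hxy.
    by rewrite !ifF; [congr f0| |]; lia.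
  by rewrite ifF ?ifT //; lia.
Qed.

Definition Generated (T : rwtree) : Prop :=
  exists n U f, [/\ Gen n U, perm_eq (labels U) (iota 1 n), 0 < n & teq T (relabel f U)].

Lemma Generated_teq T T' : teq T T' -> Generated T' -> Generated T.
Proof.
move=> E [n [U [f [G P Hn E']]]]; exists n, U, f; split => //; exact: teq_trans E E'.
Qed.

Lemma uniq_map_inj (f : nat -> nat) s : uniq (map f s) -> {in s &, injective f}.
Proof.
elim: s => //= a s IH /andP [Na U] u v; rewrite !inE.
move=> /orP [/eqP ->|Hu] /orP [/eqP ->|Hv] // E.
- by move: Na; rewrite E (map_f f Hv).
- by move: Na; rewrite -E (map_f f Hu).
- exact: IH.
Qed.

Lemma Generated_graft h T0 T1 : Generated T0 -> Generated T1 ->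
  uniq (labels T0) -> h \in labels T0 -> Generated (graft h T0 T1).
Proof.
move=> [n0 [U0 [f0 [G0 P0 Hn0 E0]]]] [n1 [U1 [f1 [G1 P1 Hn1 E1]]]] U Mh.
have PL : perm_eq (labels T0) (map f0 (labels U0)) by rewrite -labels_relabel; exact: teq_labels.
have I0 : {in labels U0 &, injective f0} by apply: uniq_map_inj; rewrite -(perm_uniq PL).
have [x Mx ->] : exists2 x, x \in labels U0 & h = f0 x by apply/mapP; rewrite -(perm_mem PL).
have [g Eg] := comp_relabel f1 P0 P1 Hn1 I0 Mx.
have Hx : 1 <= x <= n0 by rewrite -mem_iota1 -(perm_mem P0).
exists (n0 + n1 - 1), (comp n1 x U0 U1), g; split.
- exact: gen_comp.
- exact: comp_labels.
- lia.
- by rewrite Eg; exact: graft_teq.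
Qed.

Lemma Generated_leaf a : Generated (leaf a).
Proof. by exists 1, unit_tree, (fun _ => a); split => //; [exact: gen_unit | exact: teq_refl]. Qed.

Definition two_labels (a b : nat) (y : nat) : nat := if y == 1 then a else b.

Lemma Generated_mu a b : Generated (Node [:: a; b] [::]).
Proof. by exists 2, A_mu, (two_labels a b); split => //; [exact: gen_mu | exact: teq_refl]. Qed.

Lemma Generated_prec a b : Generated (Node [:: a] [:: leaf b]).
Proof. by exists 2, A_prec, (two_labels a b); split => //; [exact: gen_prec | exact: teq_refl]. Qed.

Lemma Generated_odot a b : Generated (Node [::] [:: leaf a; leaf b]).
Proof. by exists 2, A_odot, (two_labels a b); split => //; [exact: gen_odot | exact: teq_refl]. Qed.

Fixpoint tree_size (T : rwtree) : nat :=
  let: Node L cs := T in (size L + sumn (map tree_size cs)).+1.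

Definition wf_tree (T : rwtree) : bool := wf_empty T && uniq (labels T).

Definition generated_below (k : nat) : Prop :=
  forall T, tree_size T < k -> wf_tree T -> Generated T.

Lemma Generated_graft_teq h T T0 T1 : Generated T0 -> Generated T1 ->
  uniq (labels T0) -> h \in labels T0 -> teq T (graft h T0 T1) -> Generated T.
Proof. by move=> G0 G1 U Mh E; apply: Generated_teq E _; exact: Generated_graft. Qed.

Lemma teq_Permutation_children L cs ds : Permutation cs ds -> teq (Node L cs) (Node L ds).
Proof. by move=> H; apply/teq_nodeE; split; [exact: perm_refl | exact: lteq_Permutation]. Qed.

Lemma tree_size_nonleaf c : wf_empty c -> leaf_label c = None -> 2 < tree_size c.
Proof.
case: c => [[|a [|b l]] [|d [|e cs]]] //=; case: d => //=; try lia.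
by case: e => /=; lia.
Qed.

Lemma uniq_replace_block (h : nat) L X F :
  uniq (L ++ X ++ F) -> h \notin L ++ X ++ F -> uniq (L ++ h :: F).
Proof.
move=> U N; rewrite -cat1s uniq_catCA /=; apply/andP; split.
  by apply: contra N; rewrite !mem_cat => /orP [->|->]; rewrite ?orbT.
by move: U; rewrite uniq_catCA cat_uniq => /and3P [].
Qed.

(* A tree with a child that is not a leaf: graft that child, at a fresh
   label [h], onto a smaller tree. *)
Section BigChild.
Variables (L : seq nat) (cs : seq rwtree) (h : nat) (c : rwtree) (rest : seq rwtree).
Hypothesis wfT : wf_tree (Node L cs).
Hypothesis fresh : h \notin labels (Node L cs).
Hypothesis IH : generated_below (tree_size (Node L cs)).
Hypothesis pick : Permutation cs (c :: rest).
Hypothesis nonleaf : leaf_label c = None.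

Let labels_pick : perm_eq (labels (Node L cs)) (L ++ labels c ++ child_labels rest).
Proof. by rewrite /= perm_cat2l (perm_flatten_Permutation labels pick). Qed.

Let uniq_pick : uniq (L ++ labels c ++ child_labels rest).
Proof. by rewrite -(perm_uniq labels_pick); case/andP: wfT. Qed.

Let fresh_pick : h \notin L ++ labels c ++ child_labels rest.
Proof. by rewrite -(perm_mem labels_pick). Qed.

Let wf_pick : wf_empty c && all wf_empty rest.
Proof.
rewrite -[_ && _]/(all wf_empty (c :: rest)) -(all_Permutation _ pick).
by case/andP: wfT => /andP [].
Qed.

Let size_pick : tree_size (Node L cs) = (size L + (tree_size c + sumn (map tree_size rest))).+1.
Proof. by rewrite /= (sumn_Permutation tree_size pick). Qed.

Let nonempty_root : (L != [::]) || (1 < size (c :: rest)).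
Proof. by rewrite -(size_Permutation pick); case/andP: wfT => /andP []. Qed.

Let generated_c : Generated c.
Proof.
have Uc : uniq (labels c) by move: uniq_pick; rewrite uniq_catCA cat_uniq => /and3P [].
by apply: IH; [rewrite size_pick; lia | rewrite /wf_tree (andP wf_pick).1 Uc].
Qed.

Lemma Generated_white_child : ~~ is_red c -> Generated (Node L cs).
Proof.
move=> white; set T0 := Node L (leaf h :: rest).
have hT0 : h \in labels T0 by rewrite /= mem_cat inE eqxx orbT.
apply: (Generated_graft_teq _ generated_c _ hT0).
- apply: IH.
    by rewrite size_pick /=; have := tree_size_nonleaf (andP wf_pick).1 nonleaf; lia.
  rewrite /wf_tree /= (andP wf_pick).2 andbT -/(size (c :: rest)) nonempty_root /=.
  exact: uniq_replace_block uniq_pick fresh_pick.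
- by rewrite /T0 /=; exact: uniq_replace_block uniq_pick fresh_pick.
- rewrite graft_white //= ifF; last by apply: contraNF fresh_pick; rewrite mem_cat => ->.
  rewrite inE eqxx /= (_ : map _ rest = rest).
    by rewrite node_eta; apply: teq_Permutation_children.
  rewrite -[RHS]map_id; apply: List.map_ext_in => d Hd; apply: insertW_id.
  by apply: contra fresh_pick => Hhd; rewrite !mem_cat (In_labels Hd Hhd) ?orbT.
Qed.

Lemma Generated_red_child : is_red c -> Generated (Node L cs).
Proof.
move=> red; set T0 := Node (h :: L) rest.
have hT0 : h \in labels T0 by rewrite /= inE eqxx.
have UT0 : uniq (labels T0).
  by have := uniq_replace_block uniq_pick fresh_pick; rewrite /T0 /= -cat1s uniq_catCA.
apply: (Generated_graft_teq _ generated_c UT0 hT0).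
  apply: IH; last by rewrite /wf_tree UT0 andbT /T0 /= (andP wf_pick).2.
  by rewrite size_pick /=; have := tree_size_nonleaf (andP wf_pick).1 nonleaf; lia.
rewrite graft_red // ifF; last first.
  apply: contraTF nonempty_root => /eqP /leaf_labelP [EL Erest].
  by rewrite EL Erest.
rewrite insertR_node inE eqxx /= eqxx.
by apply: teq_Permutation_children; apply: Permutation_trans pick (Permutation_cons_append _ _).
Qed.
End BigChild.

(* A root with at least two labels and no children: {a, h} \circ_h {b, ...}. *)
Lemma Generated_labels_only a b l h : uniq [:: a, b & l] -> h \notin [:: a, b & l] ->
  generated_below (tree_size (Node [:: a, b & l] [::])) -> Generated (Node [:: a, b & l] [::]).
Proof.
move=> U fresh IH; have ah : a != h by apply: contraNneq fresh => <-; rewrite inE eqxx.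
apply: (@Generated_graft_teq h _ (Node [:: a; h] [::]) (Node (b :: l) [::])).
- exact: Generated_mu.
- apply: IH; first by rewrite /=; lia.
  by rewrite /wf_tree /= cats0; case/andP: U.
- by rewrite /= andbT inE.
- by rewrite /= !inE eqxx orbT.
- by rewrite graft_white //= !inE eqxx orbT /= (negbTE ah); exact: teq_refl.
Qed.

(* A labelled root {a, ...} with a leaf child {b}: (rest) \circ_a A_prec. *)
Lemma Generated_leaf_child a L b rest :
  all wf_empty rest -> uniq (a :: L ++ b :: child_labels rest) ->
  generated_below (tree_size (Node (a :: L) (leaf b :: rest))) ->
  Generated (Node (a :: L) (leaf b :: rest)).
Proof.
move=> wf_rest U IH.
have U0 : uniq (a :: L ++ child_labels rest).
  apply: subseq_uniq U; rewrite -!cat_cons.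
  exact: cat_subseq (subseq_refl _) (subseq_cons _ _).
apply: (@Generated_graft_teq a _ (Node (a :: L) rest) (Node [:: a] [:: leaf b])) => //.
- by apply: IH; [rewrite /=; lia | rewrite /wf_tree /= wf_rest].
- exact: Generated_prec.
- by rewrite /= inE eqxx.
- rewrite graft_white //= inE eqxx /=; apply/teq_nodeE; split.
    by rewrite -cat1s perm_catC.
  exact/lteq_Permutation/Permutation_cons_append.
Qed.

Lemma red_of_leaves s : all (fun c => leaf_label c != None) s -> is_red (Node [::] s).
Proof. by rewrite /is_red eqxx; apply: sub_all => -[[|? ?] ?]. Qed.

(* An empty root with only leaf children, at least three of them:
   A_odot \circ_h (empty root over the remaining leaves). *)
Lemma Generated_leaves_empty_root b b' rest h :
  uniq [:: b, b' & child_labels rest] -> h \notin [:: b, b' & child_labels rest] ->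
  all (fun c => leaf_label c != None) rest ->
  generated_below (tree_size (Node [::] [:: leaf b, leaf b' & rest])) ->
  Generated (Node [::] [:: leaf b, leaf b' & rest]).
Proof.
case: rest => [_ _ _ _|c rest U fresh leaves IH]; first exact: Generated_odot.
have bh : b != h by apply: contraNneq fresh => <-; rewrite inE eqxx.
set T1 := Node [::] [:: leaf b', c & rest].
have red : is_red T1 by apply: red_of_leaves; exact: leaves.
apply: (@Generated_graft_teq h _ (Node [::] [:: leaf b; leaf h]) T1).
- exact: Generated_odot.
- apply: IH; first by rewrite /=; lia.
  rewrite /wf_tree /=; apply/andP; split; last by case/andP: U.
  by rewrite -/(all wf_empty (c :: rest)); apply: sub_all leaves => -[[|? [|? ?]] [|? ?]].
- by rewrite /= andbT inE.
- by rewrite /= !inE eqxx orbT.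
- rewrite graft_red //= inE (negbTE bh) /= /insertR_child /= eqxx.
  by rewrite eq_sym (negbTE bh) cats0; exact: teq_refl.
Qed.

Lemma Generated_leaf_children L cs h :
  wf_tree (Node L cs) -> h \notin labels (Node L cs) ->
  all (fun c => leaf_label c != None) cs ->
  generated_below (tree_size (Node L cs)) -> Generated (Node L cs).
Proof.
case: cs => [|c rest] wfT fresh leaves IH.
  case: L wfT fresh IH => [|a [|b l]] wfT fresh IH //; first exact: Generated_leaf.
  apply: (@Generated_labels_only a b l h) IH.
    by case/andP: wfT => _; rewrite /= cats0.
  by rewrite /= cats0 in fresh.
move: leaves => /= /andP [].
case Ec: (leaf_label c) => [b|] // _ leaves; rewrite (leaf_labelP Ec) in wfT fresh IH *.
case: L wfT fresh IH => [|a L] /andP [/= wfT U] fresh IH.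
  case: rest wfT U fresh IH leaves => [|c' rest] //= _ U fresh IH /andP [].
  case Ec': (leaf_label c') => [b'|] // _ leaves; rewrite (leaf_labelP Ec') in U fresh IH *.
  exact: (@Generated_leaves_empty_root b b' rest h U fresh leaves IH).
by apply: Generated_leaf_child => //; case/andP: wfT.
Qed.

Lemma exists_fresh (s : seq nat) : exists h, h \notin s.
Proof.
suff le_sumn y : y \in s -> y <= sumn s by exists (sumn s).+1; apply/negP => /le_sumn; lia.
by elim: s => //= a s IH; rewrite inE => /orP [/eqP ->|/IH]; lia.
Qed.

Lemma Generated_wf T : wf_tree T -> Generated T.
Proof.
have [k] := ubnP (tree_size T); elim: k T => // k IHk [L cs] Hk wfT.
have IH : generated_below (tree_size (Node L cs)) by move=> T' ? ?; apply: IHk => //; lia.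
have [h fresh] := exists_fresh (labels (Node L cs)).
case: (boolP (has (fun c => leaf_label c == None) cs)) => [big | /negPf small].
  have [c [rest [pick /eqP nonleaf]]] := has_Permutation big.
  case: (boolP (is_red c)) => [red | white].
  - exact: Generated_red_child wfT fresh IH pick nonleaf red.
  - exact: Generated_white_child wfT fresh IH pick nonleaf white.
apply: Generated_leaf_children wfT fresh _ IH.
by have := negbT small; rewrite -all_predC.
Qed.

Lemma act_relabel n U f : perm_eq (labels U) (iota 1 n) ->
  act (map f (iota 1 n)) U = relabel f U.
Proof.
move=> P; apply: eq_in_relabel => y; rewrite (perm_mem P) mem_iota1 => Hy.
by rewrite (nth_map 0) ?size_iota ?nth_iota; [congr f | |]; lia.
Qed.

Lemma Generated_Gen n T : Generated T -> perm_eq (labels T) (iota 1 n) ->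
  exists T', Gen n T' /\ teq T T'.
Proof.
move=> [n' [U [f [G PU _ E]]]] P.
have PL : perm_eq (labels T) (map f (labels U)) by rewrite -labels_relabel; exact: teq_labels.
have En : n' = n.
  by have := perm_size PL; rewrite size_map (perm_size PU) (perm_size P) !size_iota.
subst n'; exists (act (map f (iota 1 n)) U); split; last by rewrite act_relabel.
apply: gen_act => //; apply: seq.perm_trans _ P; rewrite perm_sym.
by apply: seq.perm_trans PL _; exact: perm_map.
Qed.

Theorem mainTheorem15 :
  forall (n : nat) (T : rwtree), is_rw n T -> exists T', Gen n T' /\ teq T T'.
Proof.
move=> n T /andP [P W]; have U : uniq (labels T) by rewrite (perm_uniq P) iota_uniq.
by apply: Generated_Gen P; apply: Generated_wf; rewrite /wf_tree W U.
Qed.
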